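(* Let $G$ and $H$ be finite groups, $U\leq G\times H$ a subdirect product, and $A$ an abelian group satisfying the Hypothesis for a set of primes $\pi$ which contains every prime divisor of $|G|$ and $|H|$. Then the natural restriction map $\rho:\mathrm{Hom}(G\times H,A)\to\mathrm{Hom}(U,A)$ is surjective if and only if $G'\cap k_1(U)=k_1(U')$, or equivalently if and only if $H'\cap k_2(U)=k_2(U')$.
   Context: For $U\leq G\times H$: $p_1(U)=\{g:\exists h,(g,h)\in U\}$, $p_2(U)=\{h:\exists g,(g,h)\in U\}$, $k_1(U)=\{g:(g,1)\in U\}$, $k_2(U)=\{h:(1,h)\in U\}$; $U$ is a subdirect product if $p_1(U)=G$, $p_2(U)=H$. $X'$ denotes the commutator subgroup of a group $X$. An abelian group $A$ satisfies the Hypothesis (with set of primes $\pi$) if there is a unique set of primes $\pi$ such that for every $n\in\mathbb{N}$ the $n$-torsion part of $A$ is cyclic of order $n_\pi$ (the $\pi$-part of $n$). *)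

From HB Require Import structures.
From mathcomp Require Import all_boot all_order all_algebra all_fingroup.
Set Implicit Arguments. Unset Strict Implicit. Unset Printing Implicit Defensive.
Import GRing.Theory.

Local Open Scope group_scope.

Definition p1 (gT1 gT2 : finGroupType) (U : {set gT1 * gT2}) : {set gT1} :=
  [set x.1 | x in U].
Definition p2 (gT1 gT2 : finGroupType) (U : {set gT1 * gT2}) : {set gT2} :=
  [set x.2 | x in U].
Definition k1 (gT1 gT2 : finGroupType) (U : {set gT1 * gT2}) : {set gT1} :=
  [set g | (g, 1) \in U].
Definition k2 (gT1 gT2 : finGroupType) (U : {set gT1 * gT2}) : {set gT2} :=
  [set h | (1, h) \in U].

Definition subdirect (gT1 gT2 : finGroupType) (G : {set gT1}) (H : {set gT2})
  (U : {set gT1 * gT2}) : Prop :=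
  [/\ U \subset setX G H, p1 U = G & p2 U = H].

Definition is_hom (gT : finGroupType) (A : zmodType) (D : {set gT}) (f : gT -> A) : Prop :=
  {in D &, forall x y, f (x * y) = (f x + f y)%R}.

Definition torsion (A : zmodType) (n : nat) : A -> Prop := fun a => (a *+ n = 0)%R.

(* The Hypothesis (with set of primes pi): for every n >= 1 the n-torsion
   part of A is cyclic of order n_pi, i.e. it is generated by an element a
   whose order is exactly n`_pi. *)
Definition hypothesis (A : zmodType) (pi : nat_pred) : Prop :=
  forall n : nat, (0 < n)%N ->
    exists a : A,
      (forall b : A, torsion n b <-> exists k : nat, b = (a *+ k)%R) /\
      (forall m : nat, (a *+ m = 0)%R <-> (n`_pi %| m)%N).

(* A homomorphism on G x H kills (G x H)' = G' x H', so if restriction is onto,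
   every homomorphism U -> A kills U :&: (G' x H'); since A has elements of every
   pi-order, this forces U :&: (G' x H') <= U'.  Conversely, under that condition
   a homomorphism f on U kills U :&: (G x H)', so it extends to U (G x H)' and
   then to G x H one cyclic step S -> S<x> at a time.  Such a step only needs an
   m-th root of f (x ^+ m), m the order of x modulo S, and the Hypothesis
   provides one because #[x] is a pi-number.  Finally U projects onto H and U'
   onto H', so U :&: (G' x H') = U' (U :&: (G' x 1)), which turns the condition
   into G' :&: k1 U = k1 U', and symmetrically into H' :&: k2 U = k2 U'. *)

From HB Require Import structures.
From mathcomp Require Import all_boot all_order all_algebra all_fingroup all_solvable.
Set Implicit Arguments. Unset Strict Implicit. Unset Printing Implicit Defensive.
Import GRing.Theory.
Local Open Scope group_scope.

Section HomTheory.

Variables (T : finGroupType) (A : zmodType) (S : {group T}) (f : T -> A).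
Hypothesis homf : is_hom S f.

Lemma is_hom1 : f 1 = 0%R.
Proof. by apply: (addrI (f 1)); rewrite -homf ?mulg1 ?addr0. Qed.

Lemma is_homV x : x \in S -> f x^-1 = (- f x)%R.
Proof.
by move=> Sx; apply: (addrI (f x)); rewrite -homf ?groupV // mulgV is_hom1 subrr.
Qed.

Lemma is_homX x k : x \in S -> f (x ^+ k) = (f x *+ k)%R.
Proof.
move=> Sx; elim: k => [|k IHk]; first by rewrite is_hom1.
by rewrite expgS homf ?groupX // IHk mulrS.
Qed.

Lemma is_homS (R : {group T}) : R \subset S -> is_hom R f.
Proof. by move=> sRS x y Rx Ry; apply: homf; apply: (subsetP sRS). Qed.

Lemma is_hom_der1_eq0 : {in [~: S, S], forall y, f y = 0%R}.
Proof.
have kerS : group_set [set y in S | f y == 0%R].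
  apply/group_setP; split=> [|x y]; first by rewrite inE group1 is_hom1 eqxx.
  rewrite !inE => /andP[Sx /eqP fx0] /andP[Sy /eqP fy0].
  by rewrite groupM // homf // fx0 fy0 addr0 eqxx.
suff /subsetP sS'K : [~: S, S] \subset Group kerS.
  by move=> y /sS'K; rewrite inE => /andP[_ /eqP].
rewrite gen_subG; apply/subsetP => _ /imset2P[x y Sx Sy ->].
rewrite inE groupR // commgEl conjgE !homf ?groupV ?groupM ?groupV //.
by rewrite !is_homV // addrA -opprD addNr eqxx.
Qed.

End HomTheory.

Lemma expg_eq_mod_coset (T : finGroupType) (S : {group T}) x i j : x \in 'N(S) ->
  (x ^+ i * (x ^+ j)^-1 \in S) = (i == j %[mod #[coset S x]]).
Proof.
move=> Nx; rewrite -mem_rcoset -eq_expg_mod_order -!morphX //.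
by apply/rcoset_kercosetP/eqP; rewrite ?groupX.
Qed.

Lemma mem_expg_coset (T : finGroupType) (S : {group T}) x k : x \in 'N(S) ->
  (x ^+ k \in S) = (#[coset S x] %| k).
Proof.
by move=> Nx; rewrite -[x ^+ k]mulg1 -(invg1 T) -(expg0 x) expg_eq_mod_coset // mod0n.
Qed.

Lemma extend_hom_cycle (T : finGroupType) (A : zmodType) (S : {group T}) (f : T -> A) x c :
  x \in 'N(S) -> is_hom S f -> {in S & <[x]>, forall s y, f (s ^ y) = f s} ->
  (c *+ #[coset S x])%R = f (x ^+ #[coset S x]) ->
  exists2 f2 : T -> A, is_hom (S <*> <[x]>) f2 & {in S, f2 =1 f} /\ f2 x = c.
Proof.
move=> Nx homf fJ cm; set m := #[coset S x] in cm.
have m_gt0 : 0 < m := order_gt0 _.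
(* The element t = s x^i of S<x>, with s in S and i < m unique, is sent to f s + i c. *)
pose f2 t := if [pick i : 'I_m | t * (x ^+ i)^-1 \in S] is Some i
             then (f (t * (x ^+ i)^-1)%g + c *+ i)%R else 0%R.
have f2E s j : s \in S -> f2 (s * x ^+ j) = (f s + c *+ j)%R.
  move=> Ss; rewrite /f2; case: pickP => [i | no_i]; last first.
    have := no_i (Ordinal (ltn_pmod j m_gt0)).
    by rewrite -mulgA groupMl // expg_eq_mod_coset // modn_mod eqxx.
  rewrite -mulgA groupMl // expg_eq_mod_coset // (modn_small (ltn_ord i)) => /eqP <-.
  rewrite {1}(divn_eq j m) expgD mulgK homf ?mem_expg_coset ?dvdn_mull //.
  rewrite mulnC expgM (is_homX homf) ?mem_expg_coset // -cm -mulrnA -addrA -mulrnDr.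
  by rewrite mulnC -divn_eq.
exists f2; last first.
  split=> [s Ss|]; first by rewrite -{1}[s]mulg1 -(expg0 x) f2E // mulr0n addr0.
  by rewrite -[x]mul1g -[x in 1 * x]expg1 f2E // (is_hom1 homf) add0r.
rewrite norm_joinEr ?cycle_subG //.
move=> _ _ /mulsgP[s1 _ Ss1 /cycleP[j1 ->] ->] /mulsgP[s2 _ Ss2 /cycleP[j2 ->] ->].
have Ss2J : s2 ^ (x ^+ j1)^-1 \in S by rewrite memJ_norm // groupV groupX.
have -> : s1 * x ^+ j1 * (s2 * x ^+ j2) = s1 * s2 ^ (x ^+ j1)^-1 * x ^+ (j1 + j2).
  by rewrite conjgE invgK expgD !mulgA mulgKV.
rewrite (f2E _ _ (groupM Ss1 Ss2J)) !f2E // homf // fJ ?groupV ?mem_cycle //.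
by rewrite mulrnDr addrACA.
Qed.

Lemma hypothesis_divisible (A : zmodType) (pi : nat_pred) N m (b : A) :
  hypothesis A pi -> pi.-nat N -> m %| N -> (b *+ (N %/ m))%R = 0%R ->
  exists c : A, (c *+ m)%R = b.
Proof.
move=> hypA piN mN bNm0; have N_gt0 : 0 < N by case/andP: piN.
have [a [torsionE orderE]] := hypA N N_gt0.
have [|k bE] := (torsionE b).1; first by rewrite /torsion -(divnK mN) mulrnA bNm0 mul0rn.
have m_gt0 : 0 < m := dvdn_gt0 N_gt0 mN.
have Nm_gt0 : 0 < N %/ m by rewrite divn_gt0 // dvdn_leq.
have /(orderE _).1 : (a *+ (k * (N %/ m)))%R = 0%R by rewrite mulrnA -bE.
rewrite part_pnat_id // -{1}(divnK mN) mulnC dvdn_pmul2r // => mk.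
by exists (a *+ (k %/ m))%R; rewrite -mulrnA divnK.
Qed.

Lemma extend_hom_ker (T : finGroupType) (A : zmodType) (S D : {group T}) (f : T -> A) :
  S \subset 'N(D) -> is_hom S f -> {in S :&: D, forall y, f y = 0%R} ->
  exists f1 : T -> A,
    [/\ is_hom (S <*> D) f1, {in S, f1 =1 f} & {in D, forall y, f1 y = 0%R}].
Proof.
move=> nDS homf fSD0.
pose f1 t := if [pick s in S | s^-1 * t \in D] is Some s then f s else 0%R.
have f1E s y : s \in S -> y \in D -> f1 (s * y) = f s.
  move=> Ss Dy; rewrite /f1; case: pickP => [s' /andP[Ss' Ds'] | no_s]; last first.
    by have := no_s s; rewrite Ss mulKg Dy.
  rewrite mulgA groupMr // in Ds'.
  have /fSD0 : s'^-1 * s \in S :&: D by rewrite inE Ds' groupM ?groupV.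
  by rewrite homf ?groupV // (is_homV homf) // => /eqP; rewrite addrC subr_eq0 => /eqP.
exists f1; split=> [||y Dy]; last first.
- by rewrite -[y]mul1g f1E // (is_hom1 homf).
- by move=> s Ss; rewrite -{1}[s]mulg1 f1E.
rewrite norm_joinEl // => _ _ /mulsgP[s1 y1 Ss1 Dy1 ->] /mulsgP[s2 y2 Ss2 Dy2 ->].
have Dy1J : y1 ^ s2 \in D by rewrite memJ_norm // (subsetP nDS).
have -> : s1 * y1 * (s2 * y2) = s1 * s2 * (y1 ^ s2 * y2) by rewrite conjgE !mulgA mulgK.
by rewrite (f1E _ _ (groupM Ss1 Ss2) (groupM Dy1J Dy2)) !f1E // homf.
Qed.

Section Extension.

Variables (T : finGroupType) (A : zmodType) (pi : nat_pred) (X : {group T}).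
Hypotheses (hypA : hypothesis A pi) (piX : pi.-group X).

Lemma extend_hom_elt (S : {group T}) (f : T -> A) x :
  [~: X, X] \subset S -> S \subset X -> x \in X ->
  is_hom S f -> {in [~: X, X], forall y, f y = 0%R} ->
  exists2 f2 : T -> A, is_hom (S <*> <[x]>) f2 & {in S, f2 =1 f}.
Proof.
move=> sX'S sSX Xx homf fX'0.
have Nx : x \in 'N(S) := subsetP (normal_norm (sub_der1_normal sX'S sSX)) x Xx.
set m := #[coset S x].
have m_dvd_x : m %| #[x] := morph_order (coset_morphism S) Nx.
have piXx : pi.-nat #[x] := pnat_dvd (order_dvdG Xx) piX.
have [|c cm] := hypothesis_divisible (b := f (x ^+ m)) hypA piXx m_dvd_x.
  rewrite -(is_homX homf) ?mem_expg_coset // -expgM mulnC divnK //.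
  by rewrite expg_order (is_hom1 homf).
have fJ : {in S & <[x]>, forall s y, f (s ^ y) = f s}.
  move=> s y Ss xy; have Xy : y \in X by apply: subsetP xy; rewrite cycle_subG.
  have X'sy : [~ s, y] \in [~: X, X] := mem_commg (subsetP sSX s Ss) Xy.
  by rewrite conjg_mulR homf ?(subsetP sX'S _ X'sy) // (fX'0 _ X'sy) addr0.
by have [f2 homf2 [f2f _]] := extend_hom_cycle Nx homf fJ cm; exists f2.
Qed.

Lemma extend_hom_der1 (S : {group T}) (f : T -> A) :
  [~: X, X] \subset S -> S \subset X ->
  is_hom S f -> {in [~: X, X], forall y, f y = 0%R} ->
  exists2 F : T -> A, is_hom X F & {in S, F =1 f}.
Proof.
elim: {S}_.+1 {-2}S (ltnSn (#|X| - #|S|)) f => // n IHn S leSn f sX'S sSX homf fX'0.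
have [sXS | /subsetPn[x Xx notSx]] := boolP (X \subset S).
  by exists f => //; exact: (is_homS homf sXS).
have [f2 homf2 f2f] := extend_hom_elt sX'S sSX Xx homf fX'0.
have sSSx : S \subset S <*> <[x]> := joing_subl _ _.
have sSxX : S <*> <[x]> \subset X by rewrite join_subG sSX cycle_subG.
have ltSSx : #|S| < #|S <*> <[x]>|.
  apply: proper_card; apply/properP; split=> //; exists x => //.
  by rewrite mem_gen // inE cycle_id orbT.
have [||F homF Ff] := IHn _ _ f2 (subset_trans sX'S sSSx) sSxX homf2.
- have ltSX : #|S| < #|X| := leq_trans ltSSx (subset_leq_card sSxX).
  by rewrite -ltnS (leq_trans _ leSn) // ltnS ltn_sub2l.
- by move=> y X'y; rewrite f2f ?fX'0 // (subsetP sX'S).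
by exists F => // s Ss; rewrite Ff ?f2f // (subsetP sSSx).
Qed.

Lemma extend_hom (S : {group T}) (f : T -> A) :
  S \subset X -> is_hom S f -> {in S :&: [~: X, X], forall y, f y = 0%R} ->
  exists2 F : T -> A, is_hom X F & {in S, F =1 f}.
Proof.
move=> sSX homf fSX'0.
have nX'X : X \subset 'N([~: X, X]) := normal_norm (der_normal 1 X).
have [f1 [homf1 f1f f1X'0]] := extend_hom_ker (subset_trans sSX nX'X) homf fSX'0.
have sSX'X : S <*> [~: X, X] \subset X by rewrite join_subG sSX (der_sub 1 X).
have [F homF Ff1] := extend_hom_der1 (joing_subr _ _) sSX'X homf1 f1X'0.
by exists F => // s Ss; rewrite Ff1 ?f1f // (subsetP (joing_subl _ _)).
Qed.

Lemma mem_der1_of_hom_eq0 u :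
  u \in X -> (forall f : T -> A, is_hom X f -> f u = 0%R) -> u \in [~: X, X].
Proof.
move=> Xu hom_u0.
have Nu : u \in 'N([~: X, X]) := subsetP (normal_norm (der_normal 1 X)) u Xu.
set m := #[coset [~: X, X] u].
have pim : pi.-nat m := pnat_dvd (dvdn_trans (morph_order _ Nu) (order_dvdG Xu)) piX.
have [a [_ orderE]] := @hypA m (order_gt0 _).
have am0 : (a *+ m)%R = 0%R by apply/orderE; rewrite part_pnat_id.
have hom0 : is_hom [~: X, X] (fun _ => 0%R : A) by move=> *; rewrite addr0.
have [f1 homf1 [f10 f1u]] := extend_hom_cycle (c := a) Nu hom0 (fun _ _ _ _ => erefl) am0.
have sX'uX : [~: X, X] <*> <[u]> \subset X by rewrite join_subG (der_sub 1 X) cycle_subG.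
have f1X'0 : {in [~: X, X] <*> <[u]> :&: [~: X, X], forall y, f1 y = 0%R}.
  by move=> y /setIP[_ /f10].
have [f2 homf2 f2f1] := extend_hom sX'uX homf1 f1X'0.
have X'u_u : u \in [~: X, X] <*> <[u]> := subsetP (joing_subr _ _) u (cycle_id u).
have /orderE : (a *+ 1)%R = 0%R by rewrite -f1u -f2f1 ?hom_u0.
by rewrite part_pnat_id // dvdn1 => /eqP m1; rewrite -[u]expg1 mem_expg_coset // -/m m1.
Qed.

End Extension.

Lemma der1_setX (gT hT : finGroupType) (G : {group gT}) (H : {group hT}) :
  [~: setX G H, setX G H] = setX [~: G, G] [~: H, H].
Proof.
have := der_dprod 1 (setX_dprod G H).
rewrite -morphim_pairg1 -morphim_pair1g -!morphim_der ?subsetT //.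
by rewrite morphim_pairg1 morphim_pair1g => /dprodW; rewrite setX_prod.
Qed.

Lemma der1_subI_setX (gT hT : finGroupType) (G : {group gT}) (H : {group hT})
    (U : {group gT * hT}) :
  U \subset setX G H -> [~: U, U] \subset U :&: setX [~: G, G] [~: H, H].
Proof. by move=> sUGH; rewrite subsetI (der_sub 1 U) -der1_setX commgSS. Qed.

Lemma p1_morphim (gT hT : finGroupType) (U : {set gT * hT}) : p1 U = fst @* U.
Proof. by rewrite morphimEsub ?subsetT. Qed.

Lemma p2_morphim (gT hT : finGroupType) (U : {set gT * hT}) : p2 U = snd @* U.
Proof. by rewrite morphimEsub ?subsetT. Qed.

Lemma sub_ker_morphim (gT rT : finGroupType) (D : {group gT})
    (f : {morphism D >-> rT}) (M N : {group gT}) :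
  M \subset N -> N \subset D -> f @* N \subset f @* M ->
  (N \subset M) = ('ker_N f \subset M).
Proof.
move=> sMN sND sfNM; apply/idP/idP => [sNM | sKM].
  exact: subset_trans (subsetIl _ _) sNM.
have sNKM : N \subset 'ker f * M.
  by rewrite -morphimK ?(subset_trans sMN) // -sub_morphim_pre.
by rewrite -(setIidPl sNKM) -group_modr // mul_subG.
Qed.

Lemma subdirect_der1_k1 (gT hT : finGroupType) (G : {group gT}) (H : {group hT})
    (U : {group gT * hT}) :
  subdirect G H U ->
  (U :&: setX [~: G, G] [~: H, H] \subset [~: U, U]) <->
  [~: G, G] :&: k1 U = k1 [~: U, U].
Proof.
case=> sUGH _ p2U; have sU'N := der1_subI_setX sUGH.
have snd_N : snd @* (U :&: setX [~: G, G] [~: H, H]) \subset snd @* [~: U, U].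
  rewrite -(derg1 U) morphim_der ?subsetT // -(p2_morphim U) p2U.
  by rewrite derg1 (subset_trans (morphimS _ (subsetIr _ _))) ?morphim_sndX.
rewrite (sub_ker_morphim (f := @snd_morphism gT hT) sU'N) ?subsetT //.
have sk1 : k1 [~: U, U] \subset [~: G, G] :&: k1 U.
  apply/subsetP => g; rewrite !inE => /(subsetP sU'N).
  by rewrite !inE /= => /and3P[-> -> _].
split=> [/subsetP sKU' | k1E].
  apply/eqP; rewrite eqEsubset sk1 andbT; apply/subsetP => g.
  rewrite !inE => /andP[G'g Ug1]; apply: sKU'.
  by rewrite !inE /= Ug1 G'g group1 eqxx.
apply/subsetP => -[g h]; rewrite !inE /= => /andP[/and3P[Ugh G'g _] /eqP h1].
have : g \in [~: G, G] :&: k1 U by rewrite !inE G'g -h1.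
by rewrite k1E inE h1.
Qed.

Lemma subdirect_der1_k2 (gT hT : finGroupType) (G : {group gT}) (H : {group hT})
    (U : {group gT * hT}) :
  subdirect G H U ->
  (U :&: setX [~: G, G] [~: H, H] \subset [~: U, U]) <->
  [~: H, H] :&: k2 U = k2 [~: U, U].
Proof.
case=> sUGH p1U _; have sU'N := der1_subI_setX sUGH.
have fst_N : fst @* (U :&: setX [~: G, G] [~: H, H]) \subset fst @* [~: U, U].
  rewrite -(derg1 U) morphim_der ?subsetT // -(p1_morphim U) p1U.
  by rewrite derg1 (subset_trans (morphimS _ (subsetIr _ _))) ?morphim_fstX.
rewrite (sub_ker_morphim (f := @fst_morphism gT hT) sU'N) ?subsetT //.
have sk2 : k2 [~: U, U] \subset [~: H, H] :&: k2 U.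
  apply/subsetP => h; rewrite !inE => /(subsetP sU'N).
  by rewrite !inE /= => /and3P[-> _ ->].
split=> [/subsetP sKU' | k2E].
  apply/eqP; rewrite eqEsubset sk2 andbT; apply/subsetP => h.
  rewrite !inE => /andP[H'h U1h]; apply: sKU'.
  by rewrite !inE /= U1h H'h group1 eqxx.
apply/subsetP => -[g h]; rewrite !inE /= => /andP[/and3P[Ugh _ H'h] /eqP g1].
have : h \in [~: H, H] :&: k2 U by rewrite !inE H'h -g1.
by rewrite k2E inE g1.
Qed.

Lemma hom_extendable_iff (gT hT : finGroupType) (G : {group gT}) (H : {group hT})
    (U : {group gT * hT}) (A : zmodType) (pi : nat_pred) :
  hypothesis A pi -> pi.-group G -> pi.-group H -> U \subset setX G H ->
  (forall f : gT * hT -> A, is_hom U f ->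
     exists F : gT * hT -> A, is_hom (setX G H) F /\ {in U, forall u, F u = f u}) <->
  U :&: setX [~: G, G] [~: H, H] \subset [~: U, U].
Proof.
move=> hypA piG piH sUGH.
have piGH : pi.-group (setX G H) by rewrite /pgroup cardsX pnatM; apply/andP.
have piU : pi.-group U := pgroupS sUGH piGH.
split=> [extendable | sNU' f homf]; last first.
  have fGH'0 : {in U :&: [~: setX G H, setX G H], forall y, f y = 0%R}.
    move=> y /setIP[Uy]; rewrite der1_setX => GH'y.
    by apply: is_hom_der1_eq0 homf _ _; apply: (subsetP sNU'); rewrite inE Uy.
  by have [F homF Ff] := extend_hom hypA piGH sUGH homf fGH'0; exists F.
apply/subsetP => u /setIP[Uu GH'u]; apply: (mem_der1_of_hom_eq0 hypA piU Uu) => f homf.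
have [F [homF Ff]] := extendable f homf.
by rewrite -Ff //; apply: is_hom_der1_eq0 homF _ _; rewrite der1_setX.
Qed.

Theorem theorem3p2 (gT hT : finGroupType) (G : {group gT}) (H : {group hT})
  (U : {group gT * hT}) (A : zmodType) (pi : nat_pred) :
  subdirect G H U ->
  hypothesis A pi ->
  (forall p : nat, prime p -> (p %| #|G|)%N -> p \in pi) ->
  (forall p : nat, prime p -> (p %| #|H|)%N -> p \in pi) ->
  let surj := forall f : gT * hT -> A, is_hom U f ->
      exists F : gT * hT -> A, is_hom (setX G H) F /\ {in U, forall u, F u = f u} in
  (surj <-> [~: G, G] :&: k1 U = k1 [~: U, U]) /\
  (surj <-> [~: H, H] :&: k2 U = k2 [~: U, U]).
Proof.
move=> subdirU hypA piG piH surj; have [sUGH _ _] := subdirU.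
have piG_group : pi.-group G by apply/(pnatP _ (cardG_gt0 G)).
have piH_group : pi.-group H by apply/(pnatP _ (cardG_gt0 H)).
have surjE := hom_extendable_iff hypA piG_group piH_group sUGH.
by split; apply: iff_trans surjE _; [apply: subdirect_der1_k1 | apply: subdirect_der1_k2].
Qed.
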